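(* Let $A\in\mathbb{R}^{m\times n}$ with $m>n$ be a full-rank standardized matrix with no two distinct rows parallel, let $x\in\mathbb{R}^n$, and let $b=Ax$. Let $x_{k-1}$ be the $(k-1)$-st iterate of the two-subspace Kaczmarz method, and let $x_k$ be the next iterate. Then, conditionally on $x_{k-1}$, $$\mathbb{E}\|x-x_k\|_2^2\le\left(\left(1-\frac1R\right)^2-\frac DR\right)\|x-x_{k-1}\|_2^2,$$ where $D=\min\left\{\frac{\delta^2(1-\delta)}{1+\delta},\frac{\Delta^2(1-\Delta)}{1+\Delta}\right\}$.
   Context: $A\in\mathbb{R}^{m\times n}$ has rows $a_1,\dots,a_m$. It is called standardized if $\|a_i\|_2=1$ for all $i$. ''No two distinct rows parallel'' means $|\langle a_r,a_s\rangle|<1$ for all $r\ne s$. Two-subspace Kaczmarz method for $(A,b)$, $b\in\mathbb{R}^m$: start from $x_0\in\mathbb{R}^n$. For $k=1,2,\dots$, choose an ordered pair $(r,s)$ of distinct indices in $\{1,\dots,m\}$ uniformly at random among the $m^2-m$ such pairs, independently of all previous choices. Then set $\mu_k=\langle a_r,a_s\rangle$, $y_k=x_{k-1}+(b_s-\langle x_{k-1},a_s\rangle)a_s$, $v_k=\frac{a_r-\mu_k a_s}{\sqrt{1-\mu_k^2}}$, $\beta_k=\frac{b_r-b_s\mu_k}{\sqrt{1-\mu_k^2}}$, and $x_k=y_k+(\beta_k-\langle y_k,v_k\rangle)v_k$. Coherence parameters: $\Delta=\max_{j\ne k}|\langle a_j,a_k\rangle|$ and $\delta=\min_{j\ne k}|\langle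 a_j,a_k\rangle|$. Scaled condition number: $R=\|A\|_F^2\|A^{-1}\|^2$, where $\|A^{-1}\|=\inf\{M: M\|Az\|_2\ge\|z\|_2\ \text{for all } z\}$, i.e. the reciprocal of the smallest singular value of $A$. *)

From HB Require Import structures.
From mathcomp Require Import all_boot all_order all_algebra.
Set Implicit Arguments. Unset Strict Implicit. Unset Printing Implicit Defensive.
Import Order.TTheory GRing.Theory Num.Theory.
Local Open Scope ring_scope.

Section Defs.
Variable F : rcfType.

Definition dot n (u v : 'rV[F]_n) : F := \sum_(i < n) u 0 i * v 0 i.
Definition norm2 n (u : 'rV[F]_n) : F := dot u u.
Definition norm n (u : 'rV[F]_n) : F := Num.sqrt (norm2 u).

Definition frob2 m n (A : 'M[F]_(m, n)) : F := \sum_(i < m) \sum_(j < n) A i j ^+ 2.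

Definition standardized m n (A : 'M[F]_(m, n)) : Prop :=
  forall i : 'I_m, norm (row i A) = 1.

Definition no_parallel_rows m n (A : 'M[F]_(m, n)) : Prop :=
  forall r s : 'I_m, r != s -> `|dot (row r A) (row s A)| < 1.

(* M is the infimum of { M : M ||Az|| >= ||z|| for all z }, i.e. M = ||A^{-1}|| *)
Definition inv_norm_admissible m n (A : 'M[F]_(m, n)) (M : F) : Prop :=
  forall z : 'rV[F]_n, M * norm (z *m A^T) >= norm z.
Definition is_inv_norm m n (A : 'M[F]_(m, n)) (M : F) : Prop :=
  (forall M', inv_norm_admissible A M' -> M <= M') /\
  (forall L, (forall M', inv_norm_admissible A M' -> L <= M') -> L <= M).

Definition scaled_cond m n (A : 'M[F]_(m, n)) (Minv : F) : F := frob2 A * Minv ^+ 2.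

(* The neutral elements 0 (for max) and 1 (for min) do not affect the value
   as soon as there is at least one pair and all |<a_j,a_k>| lie in [0,1). *)
Definition coh_max m n (A : 'M[F]_(m, n)) : F :=
  \big[Num.max/0]_(j < m) \big[Num.max/0]_(k < m | k != j) `|dot (row j A) (row k A)|.
Definition coh_min m n (A : 'M[F]_(m, n)) : F :=
  \big[Num.min/1]_(j < m) \big[Num.min/1]_(k < m | k != j) `|dot (row j A) (row k A)|.

Definition tsk_step m n (A : 'M[F]_(m, n)) (b : 'cV[F]_m) (y : 'rV[F]_n)
    (r s : 'I_m) : 'rV[F]_n :=
  let ar := row r A in
  let as_ := row s A in
  let mu := dot ar as_ in
  let yk := y + (b s 0 - dot y as_) *: as_ in
  let vk := (Num.sqrt (1 - mu ^+ 2))^-1 *: (ar - mu *: as_) in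
  let betak := (b r 0 - b s 0 * mu) / Num.sqrt (1 - mu ^+ 2) in
  yk + (betak - dot yk vk) *: vk.

(* conditional expectation of ||x - x_k||^2 given x_{k-1} = y: the ordered pair
   (r,s), r<>s, is uniform among the m^2 - m pairs and independent of the past *)
Definition tsk_expected_err m n (A : 'M[F]_(m, n)) (b : 'cV[F]_m)
    (x y : 'rV[F]_n) : F :=
  (m%:R ^+ 2 - m%:R)^-1 *
  \sum_(r < m) \sum_(s < m | s != r) norm2 (x - tsk_step A b y r s).

End Defs.

From HB Require Import structures.
From mathcomp Require Import all_boot all_order all_algebra.
From mathcomp Require Import ring lra.
Import Order.TTheory GRing.Theory Num.Theory.
Set Implicit Arguments. Unset Strict Implicit.
Local Open Scope ring_scope.

(* Write e = x - x_{k-1}, c_i = <e, a_i> and mu = <a_r, a_s>.  A step with the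
   pair (r, s) projects twice orthogonally, so (step_error)
     ||x - x_k||^2 = ||e||^2 - c_s^2 - (c_r - mu c_s)^2 / (1 - mu^2),
   and splitting 1 / (1 - mu^2) = 1 + mu^2 / (1 - mu^2) separates the residual
   (c_r - mu c_s)^2 of a plain Kaczmarz step from the extra gain of the
   two-subspace step.  Averaging over the ordered pairs (pair_sum_errors) leaves
   three sums to bound:
   - the energy S2 = ||A e||^2 lies in [||e||^2 / ||A^{-1}||^2, m ||e||^2];
   - for fixed s the residuals are ||A (e - c_s a_s)||^2, so their total is at
     least (m ||e||^2 - S2) / ||A^{-1}||^2 (resid_sum_ge);
   - pairing (r, s) with (s, r), the gains of a pair are at least
     coh_gain |mu| (c_r^2 + c_s^2), and coh_gain |mu| >= D because coh_gain is
     unimodal on [0, 1] and delta <= |mu| <= Delta (gain_sum_ge).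
   The theorem then follows from these bounds by real arithmetic (rate_bound),
   using that the scaled condition number R = m ||A^{-1}||^2 is at least 1. *)

Section InnerProduct.
Variables (F : rcfType) (n : nat).
Implicit Types (u v w : 'rV[F]_n) (a : F).

Lemma dotC u v : dot u v = dot v u.
Proof. by apply: eq_bigr => i _; rewrite mulrC. Qed.

Lemma dotDl u v w : dot (u + v) w = dot u w + dot v w.
Proof. by rewrite /dot -big_split; apply: eq_bigr => i _; rewrite mxE mulrDl. Qed.

Lemma dotNl u w : dot (- u) w = - dot u w.
Proof. by rewrite /dot -sumrN; apply: eq_bigr => i _; rewrite mxE mulNr. Qed.

Lemma dotZl a u w : dot (a *: u) w = a * dot u w.
Proof. by rewrite /dot mulr_sumr; apply: eq_bigr => i _; rewrite mxE mulrA. Qed.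

Lemma dotBl u v w : dot (u - v) w = dot u w - dot v w.
Proof. by rewrite dotDl dotNl. Qed.

Lemma dotDr u v w : dot w (u + v) = dot w u + dot w v.
Proof. by rewrite dotC dotDl !(dotC w). Qed.

Lemma dotNr u w : dot w (- u) = - dot w u.
Proof. by rewrite dotC dotNl dotC. Qed.

Lemma dotZr a u w : dot w (a *: u) = a * dot w u.
Proof. by rewrite dotC dotZl dotC. Qed.

Lemma norm2_ge0 u : 0 <= norm2 u.
Proof. by apply: sumr_ge0 => i _; rewrite -expr2 sqr_ge0. Qed.

Lemma norm2_comb (e u v : 'rV[F]_n) al be :
  norm2 u = 1 -> norm2 v = 1 ->
  norm2 (e + al *: u + be *: v) = norm2 e + al ^+ 2 + be ^+ 2 + 2 * al * dot e u
    + 2 * be * dot e v + 2 * al * be * dot u v.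
Proof.
rewrite /norm2 => hu hv.
rewrite !(dotDl, dotDr, dotZl, dotZr) hu hv (dotC u e) (dotC v e) (dotC v u).
ring.
Qed.

Lemma norm2_proj (e u : 'rV[F]_n) :
  norm2 u = 1 -> norm2 (e - dot e u *: u) = norm2 e - dot e u ^+ 2.
Proof.
rewrite /norm2 => hu.
rewrite !(dotDl, dotDr, dotZl, dotZr, dotNl, dotNr) hu (dotC u e); ring.
Qed.

End InnerProduct.

Section MatrixFacts.
Variables (F : rcfType) (m n : nat) (A : 'M[F]_(m, n)).

Lemma row_norm2 i : standardized A -> norm2 (row i A) = 1.
Proof.
move=> /(_ i); rewrite /norm => h.
by rewrite -(sqr_sqrtr (norm2_ge0 (row i A))) h expr1n.
Qed.

Lemma standardized_width_pos (i : 'I_m) : standardized A -> (0 < n)%N.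
Proof.
move=> /(row_norm2 i); rewrite /norm2 /dot.
by case: n A => // A'; rewrite big_ord0 => /eqP; rewrite eq_sym oner_eq0.
Qed.

Lemma mulmx_tr_entry (z : 'rV[F]_n) i : (A *m z^T) i 0 = dot z (row i A).
Proof. by rewrite !mxE /dot; apply: eq_bigr => j _; rewrite !mxE mulrC. Qed.

Lemma norm2_mulmx_tr (z : 'rV[F]_n) :
  norm2 (z *m A^T) = \sum_(i < m) dot z (row i A) ^+ 2.
Proof.
apply: eq_bigr => i _; rewrite expr2; congr (_ * _);
  by rewrite !mxE; apply: eq_bigr => j _; rewrite !mxE.
Qed.

Lemma frob2_standardized : standardized A -> frob2 A = m%:R.
Proof.
move=> hstd; rewrite /frob2 (eq_bigr (fun=> 1)); first by rewrite sumr_const card_ord.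
move=> i _; rewrite -(row_norm2 i hstd); apply: eq_bigr => j _.
by rewrite !mxE expr2.
Qed.

Lemma inv_norm_bound Minv (z : 'rV[F]_n) :
  is_inv_norm A Minv -> norm2 z <= Minv ^+ 2 * norm2 (z *m A^T).
Proof.
move=> [_ Minv_glb].
have nz0 : 0 <= norm z by rewrite /norm sqrtr_ge0.
have nAz0 : 0 <= norm (z *m A^T) by rewrite /norm sqrtr_ge0.
have key : norm z <= Minv * norm (z *m A^T).
  have [nAz_pos|] := ltrP 0 (norm (z *m A^T)).
    suff : norm z / norm (z *m A^T) <= Minv by rewrite ler_pdivrMr // mulrC.
    by apply: Minv_glb => M' /(_ z); rewrite ler_pdivrMr // mulrC.
  move=> nAz_le0; have nAz_eq0 : norm (z *m A^T) = 0 by apply/le_anti/andP.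
  rewrite nAz_eq0 mulr0; case: (ltrP 0 (norm z)) => // nz_pos.
  (* every M' would satisfy M' * 0 >= ||z|| > 0, so Minv + 1 would be a lower bound *)
  have : Minv + 1 <= Minv.
    apply: Minv_glb => M' /(_ z); rewrite nAz_eq0 mulr0 => hz.
    by have := lt_le_trans nz_pos hz; rewrite ltxx.
  by rewrite gerDl ler10.
have sqr_norm k (u : 'rV[F]_k) : norm2 u = norm u ^+ 2.
  by rewrite /norm sqr_sqrtr // norm2_ge0.
rewrite !sqr_norm -exprMn; apply: lerXn2r => //; rewrite ?nnegrE //.
exact: le_trans nz0 key.
Qed.

End MatrixFacts.

Section ScalarInequalities.
Variable F : rcfType.
Implicit Types a b t mu cr cs al be M : F.

(* The function t |-> t^2 (1 - t) / (1 + t) whose values at the coherence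
   parameters make up the constant D of the theorem. *)
Definition coh_gain (t : F) : F := t ^+ 2 * (1 - t) / (1 + t).

Lemma coh_gain_ge0 t : 0 <= t -> t <= 1 -> 0 <= coh_gain t.
Proof.
move=> t0 t1; rewrite /coh_gain; apply: mulr_ge0; last by rewrite invr_ge0; lra.
by apply: mulr_ge0; [apply: sqr_ge0 | lra].
Qed.

Lemma coh_gain_le a t : 0 <= a -> 0 <= t ->
  a ^+ 2 * (1 - a) * (1 + t) <= t ^+ 2 * (1 - t) * (1 + a) -> coh_gain a <= coh_gain t.
Proof.
move=> a0 t0 h; rewrite /coh_gain ler_pdivrMr ?ltr_wpDr // [leRHS]mulrAC.
by rewrite ler_pdivlMr ?ltr_wpDr.
Qed.

(* coh_gain is unimodal on [0, 1] (increasing while t^2 + t <= 1, then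
   decreasing), hence on [a, b] it is bounded below by its endpoint values. *)
Lemma coh_gain_min a t b : 0 <= a -> a <= t -> t <= b ->
  Num.min (coh_gain a) (coh_gain b) <= coh_gain t.
Proof.
move=> a0 at_ tb; have t0 : 0 <= t by exact: le_trans at_.
have b0 : 0 <= b by exact: le_trans tb.
rewrite ge_min; case: (lerP (t ^+ 2 + t) 1) => ht; apply/orP; [left|right];
  apply: coh_gain_le => //; rewrite -subr_ge0.
- set d := t - a; set g := 1 - t - t ^+ 2.
  have d0 : 0 <= d by rewrite subr_ge0.
  have g0 : 0 <= g by rewrite /g; lra.
  have -> : t ^+ 2 * (1 - t) * (1 + a) - a ^+ 2 * (1 - a) * (1 + t) =
     d * (t * g + t * t * d + a * g + a * d + a * t * d) by rewrite /d /g; ring.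
  by rewrite mulr_ge0 // !addr_ge0 // !mulr_ge0.
- set d := b - t; set g := t + t ^+ 2 - 1.
  have d0 : 0 <= d by rewrite subr_ge0.
  have g0 : 0 <= g by rewrite /g; lra.
  have -> : t ^+ 2 * (1 - t) * (1 + b) - b ^+ 2 * (1 - b) * (1 + t) =
     d * (b * g + b * d + b * t * d + t * g + t * t * d) by rewrite /d /g; ring.
  by rewrite mulr_ge0 // !addr_ge0 // !mulr_ge0.
Qed.

Lemma pair_residuals_ge mu cr cs :
  (1 - `|mu|) ^+ 2 * (cr ^+ 2 + cs ^+ 2) <= (cr - mu * cs) ^+ 2 + (cs - mu * cr) ^+ 2.
Proof.
rewrite -subr_ge0; case: (lerP 0 mu) => hmu.
- have -> : (cr - mu * cs) ^+ 2 + (cs - mu * cr) ^+ 2 - (1 - `|mu|) ^+ 2 * (cr ^+ 2 + cs ^+ 2)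
     = 2 * mu * (cr - cs) ^+ 2 by rewrite ger0_norm //; ring.
  by rewrite mulr_ge0 ?sqr_ge0 // mulr_ge0.
- have -> : (cr - mu * cs) ^+ 2 + (cs - mu * cr) ^+ 2 - (1 - `|mu|) ^+ 2 * (cr ^+ 2 + cs ^+ 2)
     = 2 * (- mu) * (cr + cs) ^+ 2 by rewrite ltr0_norm //; ring.
  by rewrite mulr_ge0 ?sqr_ge0 // mulr_ge0 // oppr_ge0 ltW.
Qed.

(* The extra gain of the two-subspace step on a pair of rows with cosine mu:
   since 1 / (1 - mu^2) = 1 + mu^2 / (1 - mu^2), the surplus over a plain
   Kaczmarz step is the weighted residual, and it is at least coh_gain |mu|
   times the pair's energy. *)
Lemma pair_gain mu cr cs : `|mu| < 1 ->
  coh_gain `|mu| * (cr ^+ 2 + cs ^+ 2)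
    <= ((cr - mu * cs) ^+ 2 + (cs - mu * cr) ^+ 2) * (mu ^+ 2 / (1 - mu ^+ 2)).
Proof.
move=> hmu; set t := `|mu| in hmu *.
have t0 : 0 <= t by rewrite normr_ge0.
have mu2 : mu ^+ 2 = t ^+ 2 by rewrite /t real_normK ?num_real.
have den : 1 - mu ^+ 2 = (1 - t) * (1 + t) by rewrite mu2; ring.
have den_gt0 : 0 < 1 - mu ^+ 2 by rewrite den mulr_gt0 // ?subr_gt0 // ltr_wpDr.
have -> : coh_gain t * (cr ^+ 2 + cs ^+ 2) =
    ((1 - t) ^+ 2 * (cr ^+ 2 + cs ^+ 2)) * (mu ^+ 2 / (1 - mu ^+ 2)).
  by rewrite den /coh_gain mu2; field; rewrite !gt_eqF // ?subr_gt0 // ltr_wpDr.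
apply: ler_wpM2r; last exact: pair_residuals_ge.
by rewrite mulr_ge0 ?sqr_ge0 // invr_ge0 ltW.
Qed.

Lemma affine_le_endpoints a t b al be M : a <= t -> t <= b ->
  al + be * a <= M -> al + be * b <= M -> al + be * t <= M.
Proof.
move=> at_ tb ha hb; case: (lerP 0 be) => hbe.
- by apply: le_trans hb; rewrite lerD2l ler_wpM2l.
- by apply: le_trans ha; rewrite lerD2l ler_wnM2l // ltW.
Qed.

End ScalarInequalities.

Section RateArithmetic.
Variable F : rcfType.

(* With mm rows, k = ||A^{-1}||^2 (so R = mm k), the
   error E, the energy S2 = ||A e||^2 and the pair sums W (residuals) and
   G (gains), the average error over the mm (mm - 1) ordered pairs is bounded
   by the claimed rate.  After inserting the bounds on W and G, the average is
   an affine function of S2, which ranges in [E / k, mm E]; both endpoint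
   values are below the rate. *)
Lemma rate_bound (mm k D E S2 W G : F) :
  2 <= mm -> 0 <= D -> 1 <= mm * k -> 0 <= E -> E <= k * S2 -> S2 <= mm * E ->
  mm * E - S2 <= k * W -> D * (mm - 1) * S2 <= G ->
  (mm ^+ 2 - mm)^-1 * (mm * (mm - 1) * E - (mm - 1) * S2 - W - G)
    <= ((1 - (mm * k)^-1) ^+ 2 - D / (mm * k)) * E.
Proof.
move=> mm2 D0 R1 E0 hES hSE hW hG.
have mm0 : 0 < mm by lra.
have mm1 : 0 < mm - 1 by lra.
have k0 : 0 < k by rewrite -(pmulr_rgt0 _ mm0); lra.
have average_le : (mm ^+ 2 - mm)^-1 * (mm * (mm - 1) * E - (mm - 1) * S2 - W - G)
    <= E - (1 + D) * S2 / mm - (mm * E - S2) / (mm * k * (mm - 1)).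
  rewrite -subr_ge0.
  have -> : E - (1 + D) * S2 / mm - (mm * E - S2) / (mm * k * (mm - 1))
      - (mm ^+ 2 - mm)^-1 * (mm * (mm - 1) * E - (mm - 1) * S2 - W - G)
    = (W - (mm * E - S2) / k) / (mm * (mm - 1))
      + (G - D * (mm - 1) * S2) / (mm * (mm - 1)).
    by field; rewrite ?gt_eqF //; nra.
  have den0 : 0 <= mm * (mm - 1) by rewrite mulr_ge0 // ltW.
  apply: addr_ge0; apply: divr_ge0 => //; rewrite subr_ge0 //.
  by rewrite ler_pdivrMr // [leRHS]mulrC.
apply: le_trans average_le _.
set al := E - mm * E / (mm * k * (mm - 1)).
set be := (mm * k * (mm - 1))^-1 - (1 + D) / mm.
have -> : E - (1 + D) * S2 / mm - (mm * E - S2) / (mm * k * (mm - 1)) = al + be * S2.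
  by rewrite /al /be; field; rewrite ?gt_eqF //; nra.
apply: (affine_le_endpoints (a := E / k) (b := mm * E)) => //.
- by rewrite ler_pdivrMr // mulrC.
- rewrite -subr_ge0.
  have -> : ((1 - (mm * k)^-1) ^+ 2 - D / (mm * k)) * E - (al + be * (E / k))
      = E * (mm * k - 1) / ((mm * k) ^+ 2 * (mm - 1)).
    by rewrite /al /be; field; rewrite ?gt_eqF //; nra.
  apply: divr_ge0; first by rewrite mulr_ge0 // subr_ge0.
  by rewrite mulr_ge0 ?sqr_ge0 // ltW.
- rewrite -subr_ge0.
  have -> : ((1 - (mm * k)^-1) ^+ 2 - D / (mm * k)) * E - (al + be * (mm * E))
      = E * (1 - (mm * k)^-1) * (1 - (mm * k)^-1 + D).
    by rewrite /al /be; field; rewrite ?gt_eqF //; nra.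
  have Rinv_le1 : (mm * k)^-1 <= 1 by rewrite invr_le1 // ?unitf_gt0; nra.
  have one_sub_Rinv : 0 <= 1 - (mm * k)^-1 by rewrite subr_ge0.
  by rewrite !mulr_ge0 // addr_ge0.
Qed.

End RateArithmetic.

Section PairSums.
Variables (R : ringType) (m : nat).
Implicit Types f g : 'I_m -> 'I_m -> R.

Definition pair_sum f : R := \sum_(r < m) \sum_(s < m | s != r) f r s.

Lemma sum_but (h : 'I_m -> R) (r : 'I_m) :
  \sum_(s < m | s != r) h s = \sum_(s < m) h s - h r.
Proof. by rewrite [X in _ = X - _](bigD1 r) //= addrC addrK. Qed.

Lemma pair_sum_eq f g : (forall r s, s != r -> f r s = g r s) -> pair_sum f = pair_sum g.
Proof. by move=> fg; apply: eq_bigr => r _; apply: eq_bigr => s; apply: fg. Qed.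

Lemma pair_sum_swap f : pair_sum f = pair_sum (fun r s => f s r).
Proof.
rewrite /pair_sum; under eq_bigr => r _ do rewrite sum_but.
under [RHS]eq_bigr => s _ do rewrite sum_but.
by rewrite !sumrB exchange_big.
Qed.

Lemma pair_sumD f g : pair_sum (fun r s => f r s + g r s) = pair_sum f + pair_sum g.
Proof. by rewrite /pair_sum -big_split; apply: eq_bigr => r _; rewrite big_split. Qed.

Lemma pair_sumB f g : pair_sum (fun r s => f r s - g r s) = pair_sum f - pair_sum g.
Proof. by rewrite /pair_sum -sumrB; apply: eq_bigr => r _; rewrite sumrB. Qed.

Lemma pair_sum_fst (h : 'I_m -> R) :
  pair_sum (fun r _ => h r) = (m%:R - 1) * \sum_(r < m) h r.
Proof.
rewrite /pair_sum mulr_sumr; apply: eq_bigr => r _.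
by rewrite sum_but sumr_const card_ord mulrBl mul1r mulr_natl.
Qed.

Lemma pair_sum_const (a : R) : pair_sum (fun _ _ => a) = m%:R * (m%:R - 1) * a.
Proof.
apply: etrans (pair_sum_fst (fun=> a)) _.
by rewrite sumr_const card_ord mulrnAr -(mulr_natl ((m%:R - 1) * a)) mulrA.
Qed.

Lemma pair_sum_snd (h : 'I_m -> R) :
  pair_sum (fun _ s => h s) = (m%:R - 1) * \sum_(s < m) h s.
Proof. by rewrite pair_sum_swap pair_sum_fst. Qed.

End PairSums.

Section TwoSubspaceStep.
Variables (F : rcfType) (m n : nat) (A : 'M[F]_(m, n)).
Hypothesis hstd : standardized A.
Hypothesis hnp : no_parallel_rows A.

Definition cosine (r s : 'I_m) : F := dot (row r A) (row s A).

Lemma cosineC r s : cosine r s = cosine s r.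
Proof. exact: dotC. Qed.

Lemma cosine2_lt1 r s : r != s -> cosine r s ^+ 2 < 1.
Proof. by move=> rs; rewrite -real_normK ?num_real // expr_lt1 ?normr_ge0 // hnp. Qed.

Lemma cosine2_le1 r s : cosine r s ^+ 2 <= 1.
Proof.
have [->|rs] := eqVneq r s; last exact/ltW/cosine2_lt1.
by rewrite /cosine -/(norm2 _) row_norm2 // expr1n.
Qed.

Lemma coh_min_le r s : r != s -> coh_min A <= `|cosine r s|.
Proof.
move=> rs; apply: le_trans (bigmin_le _ r _) _.
by apply: bigmin_le_cond; rewrite eq_sym.
Qed.

Lemma coh_max_ge r s : r != s -> `|cosine r s| <= coh_max A.
Proof.
move=> rs; apply: le_trans (le_bigmax _ _ r).
by apply: (le_bigmax_cond _ (fun k => `|cosine r k|)); rewrite eq_sym.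
Qed.

Lemma coh_min_ge0 : 0 <= coh_min A.
Proof. by apply: le_bigmin => // i _; apply: le_bigmin. Qed.

Lemma coh_max_le1 : coh_max A <= 1.
Proof.
apply: bigmax_le => // i _; apply: bigmax_le => // j ji.
by apply/ltW/hnp; rewrite eq_sym.
Qed.

Lemma coh_constant_ge0 :
  0 <= Num.min (coh_gain (coh_min A)) (coh_gain (coh_max A)).
Proof.
rewrite le_min !coh_gain_ge0 // ?coh_min_ge0 ?coh_max_le1 ?bigmin_le_id //.
exact: bigmax_ge_id.
Qed.

Lemma coh_constant_le r s : r != s ->
  Num.min (coh_gain (coh_min A)) (coh_gain (coh_max A)) <= coh_gain `|cosine r s|.
Proof.
by move=> rs; apply: coh_gain_min; [exact: coh_min_ge0 | exact: coh_min_le | exact: coh_max_ge].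
Qed.

(* The scaled condition number is at least 1: test the definition of ||A^{-1}||
   on a row a_i, for which ||a_i|| = 1 and ||A a_i||^2 <= m. *)
Lemma scaled_cond_ge1 Minv (i : 'I_m) : is_inv_norm A Minv -> 1 <= m%:R * Minv ^+ 2.
Proof.
move=> /(inv_norm_bound (row i A)); rewrite row_norm2 // norm2_mulmx_tr => h.
apply: le_trans h _; rewrite mulrC ler_wpM2r ?sqr_ge0 //.
have -> : m%:R = \sum_(j < m) (1 : F) by rewrite sumr_const card_ord.
by apply: ler_sum => j _; exact: cosine2_le1.
Qed.

Variable e : 'rV[F]_n.

(* Coordinates of the error e = x - x_{k-1} along the rows (the entries of A e). *)
Definition coef i : F := dot e (row i A).

Definition energy : F := \sum_(i < m) coef i ^+ 2.

Definition resid r s : F := (coef r - cosine r s * coef s) ^+ 2.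

(* Extra decrease of a two-subspace step over two plain Kaczmarz projections. *)
Definition gain r s : F := resid r s * (cosine r s ^+ 2 / (1 - cosine r s ^+ 2)).

(* Closed form of one step: the pair (r, s) first projects onto the hyperplane
   of a_s, then onto that of the unit vector v_k in span(a_r, a_s) orthogonal to
   a_s; the decrease is c_s^2 + (c_r - mu c_s)^2 / (1 - mu^2) = c_s^2 + resid + gain. *)
Lemma step_error x xp r s : x - xp = e -> r != s ->
  norm2 (x - tsk_step A (A *m x^T) xp r s) = norm2 e - coef s ^+ 2 - resid r s - gain r s.
Proof.
move=> def_e rs; rewrite /tsk_step.
set ar := row r A; set as_ := row s A; set mu := dot ar as_.
have den_gt0 : 0 < 1 - mu ^+ 2 by rewrite subr_gt0 cosine2_lt1.
set q := Num.sqrt (1 - mu ^+ 2).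
have q2 : q ^+ 2 = 1 - mu ^+ 2 by rewrite sqr_sqrtr // ltW.
have q_neq0 : q != 0 by rewrite gt_eqF // sqrtr_gt0.
have as_unit : dot as_ as_ = 1 by exact: row_norm2.
have coefE i : coef i = dot x (row i A) - dot xp (row i A) by rewrite /coef -def_e dotBl.
set ga := (A *m x^T) s 0 - dot xp as_.
set ka := (_ - dot _ _).
have ga_coef : ga = coef s by rewrite /ga mulmx_tr_entry coefE.
have ka_coef : ka / q = (coef r - mu * coef s) / (1 - mu ^+ 2).
  rewrite /ka ga_coef !coefE !mulmx_tr_entry -/ar -/as_.
  rewrite !(dotDl, dotDr, dotZl, dotZr, dotBl, dotNl, dotNr) as_unit.
  rewrite (dotC as_ ar) -/mu -q2; clearbody q mu.
  move: (dot x ar) (dot x as_) (dot xp ar) (dot xp as_) => xr xs pr ps.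
  field; exact: q_neq0.
have -> : x - (xp + ga *: as_ + ka *: (q^-1 *: (ar - mu *: as_))) =
    e + (- ga + ka / q * mu) *: as_ + (- (ka / q)) *: ar.
  by rewrite -def_e; apply/rowP => j; rewrite !mxE; ring.
rewrite norm2_comb ?row_norm2 // ka_coef ga_coef (dotC as_ ar) -/mu.
rewrite /gain /resid -/(coef s) -/(coef r) /cosine -/ar -/as_ -/mu.
by field; rewrite gt_eqF.
Qed.

Lemma pair_sum_errors :
  pair_sum (fun r s => norm2 e - coef s ^+ 2 - resid r s - gain r s)
  = m%:R * (m%:R - 1) * norm2 e - (m%:R - 1) * energy - pair_sum resid - pair_sum gain.
Proof. by rewrite !pair_sumB pair_sum_const pair_sum_snd. Qed.

Lemma coef2_le i : coef i ^+ 2 <= norm2 e.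
Proof. by rewrite -subr_ge0 -norm2_proj ?row_norm2 // norm2_ge0. Qed.

Lemma energy_le : energy <= m%:R * norm2 e.
Proof.
have -> : m%:R * norm2 e = \sum_(i < m) norm2 e by rewrite sumr_const card_ord mulr_natl.
by apply: ler_sum => i _; exact: coef2_le.
Qed.

Lemma energy_ge Minv : is_inv_norm A Minv -> norm2 e <= Minv ^+ 2 * energy.
Proof. by move/(inv_norm_bound e); rewrite norm2_mulmx_tr. Qed.

(* For fixed s, the residuals against a_s are the entries of A applied to the
   projection of e onto the complement of a_s (the r = s entry vanishes). *)
Lemma resid_row_sum s :
  \sum_(r < m | r != s) resid r s = norm2 ((e - coef s *: row s A) *m A^T).
Proof.
rewrite norm2_mulmx_tr [RHS](bigD1 s) //= dotBl dotZl -/(norm2 _) row_norm2 //.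
rewrite mulr1 subrr expr0n add0r; apply: eq_bigr => r _.
by rewrite /resid dotBl dotZl cosineC mulrC.
Qed.

(* Each projection of e loses at most a factor ||A^{-1}||^2 when measured by A. *)
Lemma resid_sum_ge Minv : is_inv_norm A Minv ->
  m%:R * norm2 e - energy <= Minv ^+ 2 * pair_sum resid.
Proof.
move=> hinv.
have -> : m%:R * norm2 e = \sum_(s < m) norm2 e by rewrite sumr_const card_ord mulr_natl.
rewrite pair_sum_swap /pair_sum mulr_sumr /energy -sumrB.
apply: ler_sum => s _; rewrite resid_row_sum -norm2_proj ?row_norm2 //.
exact: inv_norm_bound.
Qed.

(* Pairing (r, s) with (s, r) and applying pair_gain to each pair. *)
Lemma gain_sum_ge :
  Num.min (coh_gain (coh_min A)) (coh_gain (coh_max A)) * (m%:R - 1) * energy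
    <= pair_sum gain.
Proof.
set D := Num.min _ _.
have pair_energy :
    pair_sum (fun r s => coef r ^+ 2 + coef s ^+ 2) = 2 * (m%:R - 1) * energy.
  by rewrite pair_sumD pair_sum_fst pair_sum_snd -/energy; ring.
have pair_gains :
    pair_sum (fun r s => gain r s + gain s r) = pair_sum gain + pair_sum gain.
  by rewrite pair_sumD -(pair_sum_swap gain).
have pair_bound r s : s != r -> D * (coef r ^+ 2 + coef s ^+ 2) <= gain r s + gain s r.
  move=> sr; rewrite eq_sym in sr.
  have pair_nonneg : 0 <= coef r ^+ 2 + coef s ^+ 2 by rewrite addr_ge0 ?sqr_ge0.
  apply: le_trans (ler_wpM2r pair_nonneg (coh_constant_le sr)) _.
  rewrite /gain /resid (cosineC s r) -mulrDl.
  by apply: pair_gain; exact: hnp.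
rewrite -(ler_pM2l (_ : 0 < 2)) //.
have -> : 2 * (D * (m%:R - 1) * energy) = D * (2 * (m%:R - 1) * energy) by ring.
have -> : 2 * pair_sum gain = pair_sum gain + pair_sum gain by ring.
rewrite -pair_energy -pair_gains /pair_sum mulr_sumr; apply: ler_sum => r _.
by rewrite mulr_sumr; apply: ler_sum => s; exact: pair_bound.
Qed.

End TwoSubspaceStep.

Unset Implicit Arguments.

Theorem lemma3 (F : rcfType) (m n : nat) (A : 'M[F]_(m, n))
    (x : 'rV[F]_n) (b : 'cV[F]_m) (Minv : F) (xprev : 'rV[F]_n) :
  (n < m)%N ->
  \rank A = n ->
  standardized A ->
  no_parallel_rows A ->
  b = A *m x^T ->
  is_inv_norm A Minv ->
  let Rc := scaled_cond A Minv in
  let dl := coh_min A in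
  let Dl := coh_max A in
  let D := Num.min (dl ^+ 2 * (1 - dl) / (1 + dl)) (Dl ^+ 2 * (1 - Dl) / (1 + Dl)) in
  tsk_expected_err A b x xprev <= ((1 - Rc^-1) ^+ 2 - D / Rc) * norm2 (x - xprev).
Proof.
move=> lt_nm _ hstd hnp -> hinv; cbv zeta.
pose i0 : 'I_m := Ordinal (leq_ltn_trans (leq0n n) lt_nm).
have m_ge2 : (1 < m)%N := leq_ltn_trans (standardized_width_pos i0 hstd) lt_nm.
set e := x - xprev.
have -> : tsk_expected_err A (A *m x^T) x xprev = (m%:R ^+ 2 - m%:R)^-1 *
    pair_sum (fun r s => norm2 e - coef A e s ^+ 2 - resid A e r s - gain A e r s).
  congr (_ * _); apply: pair_sum_eq => r s sr.
  by apply: step_error; rewrite // eq_sym.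
rewrite pair_sum_errors /scaled_cond frob2_standardized //.
apply: rate_bound.
- by rewrite (ler_nat F 2 m).
- exact: coh_constant_ge0.
- exact: scaled_cond_ge1 i0 hinv.
- exact: norm2_ge0.
- exact: energy_ge.
- exact: energy_le.
- exact: resid_sum_ge.
- exact: gain_sum_ge.
Qed.
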